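(* Every central extension of multiplicative Lie algebras is isoclinic to a stem extension.
   Context: A multiplicative Lie algebra is a group $(G,\cdot)$ with a binary operation $\star$ such that for all $x,y,z\in G$: $x\star x=1$; $x\star(yz)=(x\star y)\,{}^y(x\star z)$; $(xy)\star z={}^x(y\star z)(x\star z)$; $((x\star y)\star{}^yz)((y\star z)\star{}^zx)((z\star x)\star{}^xy)=1$; ${}^z(x\star y)={}^zx\star{}^zy$, where ${}^xy=xyx^{-1}$. $Z(G)$ is the group center, $LZ(G)=\{x: x\star y=1\ \forall y\}$, $\mathcal Z(G)=LZ(G)\cap Z(G)$; $[x,y]$ is the group commutator; ${}^M[G,G]=(G\star G)[G,G]$ with $G\star G$ the ideal generated by all $a\star b$. A short exact sequence $1\to H\xrightarrow{\alpha}G\xrightarrow{\beta}K\to1$ of multiplicative Lie algebras is a central extension if $\alpha(H)\subseteq\mathcal Z(G)$, and a stem extension if moreover $\alpha(H)\subseteq{}^M[G,G]$. Two central extensions $1\to H_i\to G_i\xrightarrow{\beta_i}K_i\to1$ are isoclinic if there are multiplicative Lie algebra isomorphisms $\lambda:K_1\to K_2$, $\mu:{}^M[G_1,G_1]\to{}^M[G_2,G_2]$ with $\mu([g,g'])=[h,h']$ and $\mu(g\star g')=h\star h'$ whenever $g,g'\in G_1$, $h,h'\in G_2$ satisfy $\beta_2(h)=\lambda\beta_1(g)$, $\beta_2(h')=\lambda\beta_1(g')$. *)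

Set Implicit Arguments.

Record MLA := {
  car :> Type;
  mul : car -> car -> car;
  one : car;
  inv : car -> car;
  star : car -> car -> car;
  mulA : forall x y z, mul x (mul y z) = mul (mul x y) z;
  mul1x : forall x, mul one x = x;
  mulx1 : forall x, mul x one = x;
  mulVx : forall x, mul (inv x) x = one;
  mulxV : forall x, mul x (inv x) = one;
  (* conjugation  ^x y = x y x^-1 is written out explicitly below *)
  star_xx : forall x, star x x = one;
  star_xM : forall x y z,
      star x (mul y z) = mul (star x y) (mul (mul y (star x z)) (inv y));
  star_Mx : forall x y z,
      star (mul x y) z = mul (mul (mul x (star y z)) (inv x)) (star x z);
  star_jacobi : forall x y z,
      mul (mul (star (star x y) (mul (mul y z) (inv y)))
               (star (star y z) (mul (mul z x) (inv z))))
          (star (star z x) (mul (mul x y) (inv x))) = one;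
  star_conj : forall x y z,
      mul (mul z (star x y)) (inv z)
      = star (mul (mul z x) (inv z)) (mul (mul z y) (inv z))
}.

Arguments mul {m}.
Arguments one {m}.
Arguments inv {m}.
Arguments star {m}.

Definition conjl {G : MLA} (x y : G) : G := mul (mul x y) (inv x).
Definition commg {G : MLA} (x y : G) : G := mul (mul (mul x y) (inv x)) (inv y).

Definition subgroup {G : MLA} (S : G -> Prop) : Prop :=
  S one /\ (forall x y, S x -> S y -> S (mul x y)) /\ (forall x, S x -> S (inv x)).

Definition ideal {G : MLA} (L : G -> Prop) : Prop :=
  subgroup L /\ (forall g l, L l -> L (conjl g l)) /\ (forall g l, L l -> L (star g l)).

Definition starGG (G : MLA) (x : G) : Prop :=
  forall L : G -> Prop, ideal L -> (forall a b : G, L (star a b)) -> L x.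

Definition commGG (G : MLA) (x : G) : Prop :=
  forall S : G -> Prop, subgroup S -> (forall a b : G, S (commg a b)) -> S x.

Definition MGG (G : MLA) (x : G) : Prop :=
  exists a b, starGG G a /\ commGG G b /\ x = mul a b.

Definition center (G : MLA) (x : G) : Prop := forall y : G, mul x y = mul y x.
Definition LZ (G : MLA) (x : G) : Prop := forall y : G, star x y = one.
Definition MLZ (G : MLA) (x : G) : Prop := LZ G x /\ center G x.

Definition mla_hom {G1 G2 : MLA} (f : G1 -> G2) : Prop :=
  (forall x y, f (mul x y) = mul (f x) (f y)) /\
  (forall x y, f (star x y) = star (f x) (f y)).

Definition mla_iso {G1 G2 : MLA} (f : G1 -> G2) : Prop :=
  mla_hom f /\ (forall x y, f x = f y -> x = y) /\ (forall z, exists x, f x = z).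

Definition short_exact {H G K : MLA} (a : H -> G) (b : G -> K) : Prop :=
  mla_hom a /\ mla_hom b /\
  (forall x y, a x = a y -> x = y) /\ (forall z, exists g, b g = z) /\
  (forall g, b g = one <-> exists h, a h = g).

Definition central_ext {H G K : MLA} (a : H -> G) (b : G -> K) : Prop :=
  short_exact a b /\ (forall h, MLZ G (a h)).

Definition stem_ext {H G K : MLA} (a : H -> G) (b : G -> K) : Prop :=
  central_ext a b /\ (forall h, MGG G (a h)).

(* mu : ^M[G1,G1] -> ^M[G2,G2] is a multiplicative Lie algebra isomorphism,
   represented by a function on G1 whose restriction to ^M[G1,G1] is one. *)
Definition MGG_iso {G1 G2 : MLA} (mu : G1 -> G2) : Prop :=
  (forall x, MGG G1 x -> MGG G2 (mu x)) /\
  (forall x y, MGG G1 x -> MGG G1 y -> mu (mul x y) = mul (mu x) (mu y)) /\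
  (forall x y, MGG G1 x -> MGG G1 y -> mu (star x y) = star (mu x) (mu y)) /\
  (forall x y, MGG G1 x -> MGG G1 y -> mu x = mu y -> x = y) /\
  (forall z, MGG G2 z -> exists x, MGG G1 x /\ mu x = z).

Definition isoclinic {H1 G1 K1 H2 G2 K2 : MLA}
    (a1 : H1 -> G1) (b1 : G1 -> K1) (a2 : H2 -> G2) (b2 : G2 -> K2) : Prop :=
  exists (lam : K1 -> K2) (mu : G1 -> G2),
    mla_iso lam /\ MGG_iso mu /\
    forall (g g' : G1) (h h' : G2),
      b2 h = lam (b1 g) -> b2 h' = lam (b1 g') ->
      mu (commg g g') = commg h h' /\ mu (star g g') = star h h'.

(* Let N = ker b; it is central and left central. Amalgamating G with the Q-vector
   space Q^G along n ~ delta_n (n in N) yields an extension G0 -> K containing G, with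
   G0 = G N0 for its kernel N0, which is central, left central and divisible. By Zorn's
   lemma pick a subgroup A of G0 maximal among those containing ^M[G0,G0] and meeting
   N0 inside ^M[G0,G0]. If some y is not in A N0, let y^k generate the powers of y in
   A N0 and choose m in N0 with (y m)^k in A; then A <y m> is a larger such subgroup.
   Hence A N0 = G0, A -> K is a stem extension, and since G and A both fill G0 up to
   the central kernel N0, their commutator and star maps agree inside G0. *)

From Stdlib Require Import ZArith Lia QArith Qcanon List.
From Stdlib Require Import Classical ClassicalEpsilon FunctionalExtensionality.
From Stdlib Require Import PropExtensionality ProofIrrelevance.
From mathcomp Require classical_sets.

Set Bullet Behavior "Strict Subproofs".

Section GroupLaws.
Context {G : MLA}.
Implicit Types x y z : G.

Lemma mul_cancel_l x y z : mul x y = mul x z -> y = z.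
Proof.
  intro H. rewrite <- (mul1x _ y), <- (mul1x _ z), <- (mulVx _ x), <- !mulA, H.
  reflexivity.
Qed.

Lemma mul_cancel_r x y z : mul y x = mul z x -> y = z.
Proof.
  intro H. rewrite <- (mulx1 _ y), <- (mulx1 _ z), <- (mulxV _ x), !mulA, H.
  reflexivity.
Qed.

Lemma inv_unique x y : mul x y = one -> y = inv x.
Proof. intro H. apply (mul_cancel_l x). rewrite H, mulxV. reflexivity. Qed.

Lemma inv_inv x : inv (inv x) = x.
Proof. symmetry. apply inv_unique, mulVx. Qed.

Lemma inv_unique_l x y : mul y x = one -> y = inv x.
Proof. intro H. apply (mul_cancel_r x). rewrite H, mulVx. reflexivity. Qed.

Lemma inv_mul x y : inv (mul x y) = mul (inv y) (inv x).
Proof.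
  symmetry. apply inv_unique.
  rewrite !mulA, <- (mulA _ x y), mulxV, mulx1, mulxV. reflexivity.
Qed.

Lemma inv_one : inv (@one G) = one.
Proof. symmetry. apply inv_unique, mul1x. Qed.

Lemma idem_one x : mul x x = x -> x = one.
Proof. intro H. apply (mul_cancel_l x). rewrite H, mulx1. reflexivity. Qed.

Lemma mulVK x y : mul (mul x (inv y)) y = x.
Proof. rewrite <- mulA, mulVx, mulx1. reflexivity. Qed.

Lemma mulKV x y : mul (mul x y) (inv y) = x.
Proof. rewrite <- mulA, mulxV, mulx1. reflexivity. Qed.

End GroupLaws.

Ltac group_simpl :=
  repeat rewrite ?mulA, ?mulVK, ?mulKV, ?mulVx, ?mulxV, ?mulx1, ?mul1x,
                 ?inv_inv, ?inv_one, ?inv_mul.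

Section StarLaws.
Context {G : MLA}.
Implicit Types x y n : G.

Lemma star_anti x y : star y x = inv (star x y).
Proof.
  (* Expand [star (x y) (x y) = one] with both distributivity axioms. *)
  apply inv_unique_l, (mul_cancel_l x). rewrite mulx1. apply (mul_cancel_r (inv x)).
  rewrite mulxV.
  generalize (star_xx G (mul x y)).
  rewrite star_Mx, !star_xM, !star_xx, mulx1, mulxV, mulx1, mul1x.
  intro H. rewrite <- H. group_simpl. reflexivity.
Qed.

Lemma LZ_star_r n y : LZ G n -> star y n = one.
Proof. intro H. rewrite star_anti, H, inv_one. reflexivity. Qed.

Lemma star_mulLZ_l x n y : LZ G n -> star (mul x n) y = star x y.
Proof. intro H. rewrite star_Mx, H, mulx1, mulxV, mul1x. reflexivity. Qed.

Lemma star_mulLZ_r x y n : LZ G n -> star x (mul y n) = star x y.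
Proof. intro H. rewrite star_xM, (LZ_star_r _ _ H), mulx1, mulxV, mulx1. reflexivity. Qed.

Lemma mul_center_swap x n y : center G n -> mul (mul x n) y = mul (mul x y) n.
Proof. intro H. rewrite <- !mulA, H. reflexivity. Qed.

Lemma commg_mulC_l x n y : center G n -> commg (mul x n) y = commg x y.
Proof.
  intro H. unfold commg. group_simpl. rewrite (mul_center_swap x n y H). group_simpl.
  reflexivity.
Qed.

Lemma commg_mulC_r x y n : center G n -> commg x (mul y n) = commg x y.
Proof.
  intro H. unfold commg. group_simpl.
  rewrite (mul_center_swap (mul x y) n (inv x) H), (mul_center_swap _ n (inv n) H).
  group_simpl. reflexivity.
Qed.

Lemma conjl_mulC_l x n y : center G n -> conjl (mul x n) y = conjl x y.
Proof.
  intro H. unfold conjl. group_simpl. rewrite (mul_center_swap x n y H). group_simpl.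
  reflexivity.
Qed.

Lemma conjl_eq_commg_mul z x : conjl z x = mul (commg z x) x.
Proof. unfold conjl, commg. group_simpl. reflexivity. Qed.

End StarLaws.

Section Homomorphisms.
Context {G1 G2 : MLA} {f : G1 -> G2}.
Hypothesis hf : mla_hom f.
Implicit Types x y : G1.

Lemma hom_mul x y : f (mul x y) = mul (f x) (f y).
Proof. apply hf. Qed.

Lemma hom_star x y : f (star x y) = star (f x) (f y).
Proof. apply hf. Qed.

Lemma hom_one : f one = one.
Proof. apply idem_one. rewrite <- hom_mul, mul1x. reflexivity. Qed.

Lemma hom_inv x : f (inv x) = inv (f x).
Proof. apply inv_unique. rewrite <- hom_mul, mulxV. apply hom_one. Qed.

Lemma hom_conjl x y : f (conjl x y) = conjl (f x) (f y).
Proof. unfold conjl. rewrite !hom_mul, hom_inv. reflexivity. Qed.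

Lemma hom_commg x y : f (commg x y) = commg (f x) (f y).
Proof. unfold commg. rewrite !hom_mul, !hom_inv. reflexivity. Qed.

Lemma subgroup_image (P : G1 -> Prop) :
  subgroup P -> subgroup (fun z => exists x, P x /\ z = f x).
Proof.
  intros [P1 [PM PI]]. split; [|split].
  - exists one. split; [exact P1 | symmetry; apply hom_one].
  - intros z z' [x [Hx ->]] [x' [Hx' ->]]. exists (mul x x').
    split; [auto | symmetry; apply hom_mul].
  - intros z [x [Hx ->]]. exists (inv x). split; [auto | symmetry; apply hom_inv].
Qed.

Lemma MLZ_hom_surj x : (forall z, exists x', f x' = z) -> MLZ G1 x -> MLZ G2 (f x).
Proof.
  intros fsurj [HL HC]. split; intro z; destruct (fsurj z) as [x' <-].
  - rewrite <- hom_star, HL. apply hom_one.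
  - rewrite <- !hom_mul, HC. reflexivity.
Qed.

Lemma MLZ_hom_inj x : (forall x' x'', f x' = f x'' -> x' = x'') -> MLZ G2 (f x) -> MLZ G1 x.
Proof.
  intros finj [HL HC]. split; intro y; apply finj.
  - rewrite hom_star, HL, hom_one. reflexivity.
  - rewrite !hom_mul. apply HC.
Qed.

End Homomorphisms.

Lemma kernel_subgroup {G K : MLA} (g : G -> K) :
  mla_hom g -> subgroup (fun x => g x = one).
Proof.
  intro hg. split; [|split].
  - apply (hom_one hg).
  - intros x y Hx Hy. rewrite (hom_mul hg), Hx, Hy. apply mulx1.
  - intros x Hx. rewrite (hom_inv hg), Hx. apply inv_one.
Qed.

Fixpoint pow {G : MLA} (x : G) (k : nat) : G :=
  match k with O => one | S k => mul x (pow x k) end.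

Definition zpow {G : MLA} (x : G) (i : Z) : G :=
  if (0 <=? i)%Z then pow x (Z.to_nat i) else inv (pow x (Z.to_nat (- i))).

Section IntegerPowers.
Context {G : MLA}.
Implicit Types x y n : G.

Lemma pow_succ_r x k : pow x (S k) = mul (pow x k) x.
Proof.
  induction k as [|k IH]; simpl in *.
  - rewrite mulx1, mul1x. reflexivity.
  - rewrite <- mulA, <- IH. reflexivity.
Qed.

Lemma zpow_0 x : zpow x 0 = one.
Proof. reflexivity. Qed.

Lemma zpow_succ x i : zpow x (Z.succ i) = mul (zpow x i) x.
Proof.
  unfold zpow. destruct (Z.leb_spec 0 i) as [Hi|Hi].
  - rewrite (proj2 (Z.leb_le 0 (Z.succ i))) by lia.
    rewrite Z2Nat.inj_succ by lia. apply pow_succ_r.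
  - replace (Z.to_nat (- i)) with (S (Z.to_nat (- Z.succ i))) by lia. simpl.
    destruct (Z.leb_spec 0 (Z.succ i)).
    + replace (Z.to_nat (Z.succ i)) with O by lia.
      replace (Z.to_nat (- Z.succ i)) with O by lia. simpl. group_simpl. reflexivity.
    + group_simpl. reflexivity.
Qed.

Lemma zpow_pred x i : zpow x (Z.pred i) = mul (zpow x i) (inv x).
Proof.
  rewrite <- (Z.succ_pred i) at 2. rewrite zpow_succ. group_simpl. reflexivity.
Qed.

Lemma zpow_1 x : zpow x 1 = x.
Proof. change 1%Z with (Z.succ 0). rewrite zpow_succ, mul1x. reflexivity. Qed.

Lemma zpow_add x i j : zpow x (i + j) = mul (zpow x i) (zpow x j).
Proof.
  induction j as [|j IH|j IH] using Z.peano_ind.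
  - rewrite Z.add_0_r, zpow_0, mulx1. reflexivity.
  - rewrite Z.add_succ_r, !zpow_succ, IH, mulA. reflexivity.
  - rewrite Z.add_pred_r, !zpow_pred, IH, mulA. reflexivity.
Qed.

Lemma zpow_opp x i : zpow x (- i) = inv (zpow x i).
Proof. apply inv_unique. rewrite <- zpow_add, Z.add_opp_diag_r. reflexivity. Qed.

Lemma subgroup_zpow (S : G -> Prop) x i : subgroup S -> S x -> S (zpow x i).
Proof.
  intros [S1 [SM SI]] Sx.
  induction i as [|i IH|i IH] using Z.peano_ind.
  - exact S1.
  - rewrite zpow_succ. auto.
  - rewrite zpow_pred. auto.
Qed.

Lemma subgroup_center : subgroup (center G).
Proof.
  split; [|split].
  - intro y. rewrite mul1x, mulx1. reflexivity.
  - intros x y Hx Hy z. rewrite <- mulA, Hy, mulA, Hx, mulA. reflexivity.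
  - intros x Hx y. apply (mul_cancel_l x). rewrite mulA, mulxV, mul1x, mulA, Hx, mulKV.
    reflexivity.
Qed.

Lemma zpow_mulC x n i : center G n -> zpow (mul x n) i = mul (zpow x i) (zpow n i).
Proof.
  intro Hn. assert (Hni : forall j, center G (zpow n j))
    by (intro j; apply subgroup_zpow; [apply subgroup_center | exact Hn]).
  induction i as [|i IH|i IH] using Z.peano_ind.
  - rewrite !zpow_0, mulx1. reflexivity.
  - rewrite !zpow_succ, IH, mulA, (mul_center_swap _ _ _ (Hni i)). group_simpl.
    reflexivity.
  - rewrite !zpow_pred, IH, <- (Hn x), inv_mul, mulA, (mul_center_swap _ _ _ (Hni i)).
    group_simpl. reflexivity.
Qed.

End IntegerPowers.

Lemma hom_zpow {G1 G2 : MLA} (f : G1 -> G2) x i :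
  mla_hom f -> f (zpow x i) = zpow (f x) i.
Proof.
  intro hf. induction i as [|i IH|i IH] using Z.peano_ind.
  - apply (hom_one hf).
  - rewrite !zpow_succ, (hom_mul hf), IH. reflexivity.
  - rewrite !zpow_pred, (hom_mul hf), (hom_inv hf), IH. reflexivity.
Qed.

(** * The ideal ^M[G, G] and its images *)

Section DerivedIdeals.
Context {G : MLA}.
Implicit Types g x y : G.

Lemma starGG_ideal : ideal (starGG G).
Proof.
  split; [split; [|split] | split].
  - intros L [[L1 _] _] _. exact L1.
  - intros x y Hx Hy L HL Hs. apply HL; [apply Hx | apply Hy]; auto.
  - intros x Hx L HL Hs. apply HL, Hx; auto.
  - intros g x Hx L HL Hs. apply HL, Hx; auto.
  - intros g x Hx L HL Hs. apply HL, Hx; auto.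
Qed.

Lemma starGG_star x y : starGG G (star x y).
Proof. intros L _ H. apply H. Qed.

Lemma commGG_subgroup : subgroup (commGG G).
Proof.
  split; [|split].
  - intros S [S1 _] _. exact S1.
  - intros x y Hx Hy S HS Hc. apply HS; [apply Hx | apply Hy]; auto.
  - intros x Hx S HS Hc. apply HS, Hx; auto.
Qed.

Lemma commGG_commg x y : commGG G (commg x y).
Proof. intros S _ H. apply H. Qed.

Lemma commGG_conjl g x : commGG G x -> commGG G (conjl g x).
Proof.
  intro Hx. pose proof commGG_subgroup as [C1 [CM CI]].
  refine (Hx (fun x => forall g, commGG G (conjl g x)) _ _ g).
  - split; [|split].
    + intro h. unfold conjl. rewrite mulx1, mulxV. exact C1.
    + intros x1 x2 H1 H2 h.
      replace (conjl h (mul x1 x2)) with (mul (conjl h x1) (conjl h x2))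
        by (unfold conjl; group_simpl; reflexivity). auto.
    + intros x1 H1 h.
      replace (conjl h (inv x1)) with (inv (conjl h x1))
        by (unfold conjl; group_simpl; reflexivity). auto.
  - intros a b h.
    replace (conjl h (commg a b)) with (commg (conjl h a) (conjl h b))
      by (unfold conjl, commg; group_simpl; reflexivity).
    apply commGG_commg.
Qed.

Lemma MGG_of_starGG x : starGG G x -> MGG G x.
Proof.
  intro Hx. exists x, one.
  split; [exact Hx | split; [apply commGG_subgroup | symmetry; apply mulx1]].
Qed.

Lemma MGG_of_commGG x : commGG G x -> MGG G x.
Proof.
  intro Hx. exists one, x.
  split; [apply starGG_ideal | split; [exact Hx | symmetry; apply mul1x]].
Qed.

Lemma MGG_star x y : MGG G (star x y).
Proof. apply MGG_of_starGG, starGG_star. Qed.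

Lemma MGG_commg x y : MGG G (commg x y).
Proof. apply MGG_of_commGG, commGG_commg. Qed.

(* Commutator factors are moved past star factors by conjugation, as G * G is normal. *)
Lemma MGG_subgroup : subgroup (MGG G).
Proof.
  pose proof starGG_ideal as [[S1 [SM SI]] _]. pose proof commGG_subgroup as [_ [CM CI]].
  split; [|split].
  - apply MGG_of_starGG, S1.
  - intros ? ? [a [c [Ha [Hc ->]]]] [a' [c' [Ha' [Hc' ->]]]].
    exists (mul a a'), (mul (conjl (inv a') c) c').
    split; [auto | split; [apply CM; [apply commGG_conjl|]; auto |]].
    unfold conjl. group_simpl. reflexivity.
  - intros ? [a [c [Ha [Hc ->]]]]. exists (inv a), (conjl a (inv c)).
    split; [auto | split; [apply commGG_conjl; auto |]].
    unfold conjl. group_simpl. reflexivity.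
Qed.

End DerivedIdeals.

Section DerivedIdealImages.
Context {G1 G2 : MLA} {f : G1 -> G2}.
Hypothesis hf : mla_hom f.

Lemma hom_starGG x : starGG G1 x -> starGG G2 (f x).
Proof.
  intros Hx L [[L1 [LM LI]] [LC LS]] Hs. apply (Hx (fun x => L (f x))).
  - split; [split; [|split] | split]; intros;
      rewrite ?(hom_one hf), ?(hom_mul hf), ?(hom_inv hf), ?(hom_conjl hf), ?(hom_star hf);
      auto.
  - intros a b. rewrite (hom_star hf). apply Hs.
Qed.

Lemma hom_commGG x : commGG G1 x -> commGG G2 (f x).
Proof.
  intros Hx S [S1 [SM SI]] Hc. apply (Hx (fun x => S (f x))).
  - split; [|split]; intros; rewrite ?(hom_one hf), ?(hom_mul hf), ?(hom_inv hf); auto.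
  - intros a b. rewrite (hom_commg hf). apply Hc.
Qed.

Lemma hom_MGG x : MGG G1 x -> MGG G2 (f x).
Proof.
  intros [a [c [Ha [Hc ->]]]]. exists (f a), (f c).
  split; [apply hom_starGG, Ha | split; [apply hom_commGG, Hc | apply (hom_mul hf)]].
Qed.

Hypothesis f_cover : forall y, exists x n, MLZ G2 n /\ y = mul (f x) n.

Lemma starGG_image y : starGG G2 y -> exists x, starGG G1 x /\ y = f x.
Proof.
  pose proof (@starGG_ideal G1) as [HS [HC HT]].
  intro Hy. apply Hy.
  - split; [apply (subgroup_image hf), HS | split].
    + intros z ? [x [Hx ->]]. destruct (f_cover z) as [g [n [[_ Hn] ->]]].
      exists (conjl g x). split; [auto |].
      rewrite (conjl_mulC_l _ _ _ Hn). symmetry. apply (hom_conjl hf).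
    + intros z ? [x [Hx ->]]. destruct (f_cover z) as [g [n [[Hn _] ->]]].
      exists (star g x). split; [auto |].
      rewrite (star_mulLZ_l _ _ _ Hn). symmetry. apply (hom_star hf).
  - intros z z'.
    destruct (f_cover z) as [g [n [[Hn _] ->]]], (f_cover z') as [g' [n' [[Hn' _] ->]]].
    exists (star g g'). split; [apply starGG_star |].
    rewrite (star_mulLZ_l _ _ _ Hn), (star_mulLZ_r _ _ _ Hn'). symmetry. apply (hom_star hf).
Qed.

Lemma commGG_image y : commGG G2 y -> exists x, commGG G1 x /\ y = f x.
Proof.
  intro Hy. apply Hy.
  - apply (subgroup_image hf), commGG_subgroup.
  - intros z z'.
    destruct (f_cover z) as [g [n [[_ Hn] ->]]], (f_cover z') as [g' [n' [[_ Hn'] ->]]].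
    exists (commg g g'). split; [apply commGG_commg |].
    rewrite (commg_mulC_l _ _ _ Hn), (commg_mulC_r _ _ _ Hn'). symmetry.
    apply (hom_commg hf).
Qed.

Lemma MGG_image y : MGG G2 y -> exists x, MGG G1 x /\ y = f x.
Proof.
  intros [a [c [Ha [Hc ->]]]].
  destruct (starGG_image a Ha) as [a' [Ha' ->]], (commGG_image c Hc) as [c' [Hc' ->]].
  exists (mul a' c'). split; [exists a', c'; auto | symmetry; apply (hom_mul hf)].
Qed.

End DerivedIdealImages.

(** * Isoclinism through a common central enlargement *)

Definition central_enlargement {G1 G0 K : MLA} (b1 : G1 -> K) (b0 : G0 -> K)
    (f : G1 -> G0) : Prop :=
  mla_hom f /\ (forall x y, f x = f y -> x = y) /\ (forall x, b0 (f x) = b1 x) /\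
  (forall y, exists x n, b0 n = one /\ y = mul (f x) n).

Lemma hom_fibre {G K : MLA} (b : G -> K) (y y' : G) :
  mla_hom b -> b y = b y' -> exists n, b n = one /\ y' = mul y n.
Proof.
  intros hb E. exists (mul (inv y) y'). split.
  - rewrite (hom_mul hb), (hom_inv hb), E, mulVx. reflexivity.
  - group_simpl. reflexivity.
Qed.

Lemma enlargement_MLZ_cover {G G0 K : MLA} (b : G -> K) (b0 : G0 -> K) (f : G -> G0) :
  (forall n, b0 n = one -> MLZ G0 n) -> central_enlargement b b0 f ->
  forall y, exists x n, MLZ G0 n /\ y = mul (f x) n.
Proof.
  intros b0_ker [_ [_ [_ hcov]]] y. destruct (hcov y) as [x [n [Hn ->]]].
  exists x, n. auto.
Qed.

Section CommonEnlargement.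
Context {H1 G1 H2 G2 G0 K : MLA}.
Variables (a1 : H1 -> G1) (b1 : G1 -> K) (a2 : H2 -> G2) (b2 : G2 -> K).
Variables (b0 : G0 -> K) (f1 : G1 -> G0) (f2 : G2 -> G0).
Hypothesis hb0 : mla_hom b0.
Hypothesis b0_ker : forall n, b0 n = one -> MLZ G0 n.
Hypothesis hf1 : central_enlargement b1 b0 f1.
Hypothesis hf2 : central_enlargement b2 b0 f2.

(* On ^M[G1, G1] this is the inverse of [f2] composed with [f1]; it is arbitrary elsewhere. *)
Definition isoclinism_map (x : G1) : G2 :=
  epsilon (inhabits one) (fun y => MGG G2 y /\ f2 y = f1 x).

Lemma isoclinism_map_spec x :
  MGG G1 x -> MGG G2 (isoclinism_map x) /\ f2 (isoclinism_map x) = f1 x.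
Proof.
  intro Hx. unfold isoclinism_map. apply epsilon_spec.
  destruct (MGG_image (proj1 hf2) (enlargement_MLZ_cover _ _ _ b0_ker hf2) (f1 x)
              (hom_MGG (proj1 hf1) x Hx)) as [y [Hy E]].
  exists y. auto.
Qed.

Lemma isoclinism_map_val x : MGG G1 x -> f2 (isoclinism_map x) = f1 x.
Proof. intro Hx. apply isoclinism_map_spec, Hx. Qed.

Lemma enlargement_commg_star g g' h h' :
  b2 h = b1 g -> b2 h' = b1 g' ->
  f2 (commg h h') = f1 (commg g g') /\ f2 (star h h') = f1 (star g g').
Proof.
  destruct hf1 as [f1_hom [_ [f1_b _]]], hf2 as [f2_hom [_ [f2_b _]]].
  intros E E'.
  assert (Hfib : forall x y, b2 y = b1 x ->
                   exists n, MLZ G0 n /\ f2 y = mul (f1 x) n).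
  { intros x y Exy. destruct (hom_fibre b0 (f1 x) (f2 y) hb0) as [n [Hn En]].
    - rewrite f1_b, f2_b. auto.
    - exists n. auto. }
  destruct (Hfib g h E) as [n [[HnL HnC] En]], (Hfib g' h' E') as [n' [[HnL' HnC'] En']].
  rewrite (hom_commg f1_hom), (hom_commg f2_hom), (hom_star f1_hom), (hom_star f2_hom),
    En, En', commg_mulC_l, commg_mulC_r, star_mulLZ_l, star_mulLZ_r by assumption.
  auto.
Qed.

Theorem isoclinic_of_common_enlargement : isoclinic a1 b1 a2 b2.
Proof.
  destruct hf1 as [f1_hom [f1_inj _]], hf2 as [f2_hom [f2_inj _]].
  pose proof (@MGG_subgroup G1) as [_ [MM _]].
  exists (fun k => k), isoclinism_map. split; [|split].
  - split; [split; reflexivity | split; eauto].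
  - split; [|split; [|split; [|split]]].
    + intros x Hx. apply isoclinism_map_spec, Hx.
    + intros x y Hx Hy. apply f2_inj.
      rewrite (hom_mul f2_hom), !isoclinism_map_val, (hom_mul f1_hom); auto.
    + intros x y Hx Hy. apply f2_inj.
      rewrite (hom_star f2_hom), !isoclinism_map_val, (hom_star f1_hom); auto using MGG_star.
    + intros x y Hx Hy E. apply f1_inj.
      rewrite <- (isoclinism_map_val x Hx), <- (isoclinism_map_val y Hy), E. reflexivity.
    + intros z Hz.
      destruct (MGG_image f1_hom (enlargement_MLZ_cover _ _ _ b0_ker hf1) (f2 z)
                  (hom_MGG f2_hom z Hz)) as [x [Hx E]].
      exists x. split; [exact Hx |]. apply f2_inj.
      rewrite isoclinism_map_val; auto.
  - intros g g' h h' E E'.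
    destruct (enlargement_commg_star g g' h h' E E') as [Ec Es].
    split; apply f2_inj; rewrite isoclinism_map_val; auto using MGG_commg, MGG_star.
Qed.

End CommonEnlargement.

(** * Complements of a divisible central subgroup *)

Lemma zorn_subsets (T : Type) (P : (T -> Prop) -> Prop) (X0 : T -> Prop) :
  P X0 ->
  (forall F : (T -> Prop) -> Prop, (exists X, F X) -> (forall X, F X -> P X) ->
     (forall X Y, F X -> F Y -> (forall x, X x -> Y x) \/ (forall x, Y x -> X x)) ->
     P (fun x => exists X, F X /\ X x)) ->
  exists A, P A /\ forall B, (forall x, A x -> B x) -> P B -> forall x, B x -> A x.
Proof.
  intros PX0 Hchain.
  (* Adjoining the empty set to [P] makes the empty chain harmless. *)
  destruct (@classical_sets.Zorn_bigcup T (fun X => P X \/ X = fun _ => False))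
    as [A [PA Amax]].
  - intros F FP Ftot.
    destruct (classic (exists X, F X /\ P X)) as [[X1 [FX1 PX1]] | NP].
    + left.
      replace (classical_sets.bigcup F (fun X => X))
        with (fun x => exists X, (F X /\ P X) /\ X x).
      * apply Hchain; [eauto | tauto |]. intros X Y [FX _] [FY _]. apply Ftot; auto.
      * apply functional_extensionality. intro x. apply propositional_extensionality.
        split; [intros [X [[FX _] Xx]]; exists X; auto | intros [X FX Xx]].
        exists X. destruct (FP X FX) as [PX | ->]; [auto | contradiction].
    + right. apply functional_extensionality. intro x. apply propositional_extensionality.
      split; [intros [X FX Xx] | contradiction].
      destruct (FP X FX) as [PX | ->]; [exfalso; eauto | exact Xx].
  - destruct PA as [PA | ->].
    + exists A. split; [exact PA |]. intros B AB PB x Bx. apply NNPP. intro nAx.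
      apply (Amax B); [split; [exact AB | intro BA; exact (nAx (BA x Bx))] | left; exact PB].
    + exists X0. split; [exact PX0 |]. intros B _ PB x Bx. exfalso.
      apply (Amax B); [split; [intros y [] | intro BA; exact (BA x Bx)] | left; exact PB].
Qed.

Lemma Z_closed_mul (J : Z -> Prop) :
  J 0%Z -> (forall i j, J i -> J j -> J (i + j)%Z) -> (forall i, J i -> J (- i)%Z) ->
  forall k q, J k -> J (q * k)%Z.
Proof.
  intros J0 JD JN k q Jk. induction q as [|q IH|q IH] using Z.peano_ind.
  - exact J0.
  - replace (Z.succ q * k)%Z with (q * k + k)%Z by lia. auto.
  - replace (Z.pred q * k)%Z with (q * k + - k)%Z by lia. auto.
Qed.

Lemma Z_subgroup_generator (J : Z -> Prop) :
  J 0%Z -> (forall i j, J i -> J j -> J (i + j)%Z) -> (forall i, J i -> J (- i)%Z) ->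
  exists k, (0 <= k)%Z /\ J k /\ forall i, J i -> (k | i)%Z.
Proof.
  intros J0 JD JN.
  destruct (classic (exists i, i <> 0%Z /\ J i)) as [[i [Hi0 Ji]] | Hnone].
  - set (Jpos := fun n : nat => (0 < n)%nat /\ J (Z.of_nat n)).
    destruct (dec_inh_nat_subset_has_unique_least_element Jpos) as [k [[[Hk0 Jk] Hmin] _]].
    + intro n. apply classic.
    + exists (Z.to_nat (Z.abs i)). split; [lia |].
      rewrite Z2Nat.id by lia. destruct (Z.abs_spec i) as [[_ ->] | [_ ->]]; auto.
    + exists (Z.of_nat k). split; [lia | split; [exact Jk |]].
      intros j Jj. apply Z.mod_divide; [lia |].
      assert (Jr : J (j mod Z.of_nat k)%Z).
      { rewrite Z.mod_eq by lia.
        replace (j - Z.of_nat k * (j / Z.of_nat k))%Z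
          with (j + - (j / Z.of_nat k) * Z.of_nat k)%Z by ring.
        apply JD; [exact Jj | apply Z_closed_mul; auto]. }
      pose proof (Z.mod_pos_bound j (Z.of_nat k) ltac:(lia)) as Hr.
      destruct (Z.eq_dec (j mod Z.of_nat k) 0) as [E | E]; [exact E | exfalso].
      assert (Hle : (k <= Z.to_nat (j mod Z.of_nat k))%nat).
      { apply Hmin. split; [lia | rewrite Z2Nat.id by lia; exact Jr]. }
      lia.
  - exists 0%Z. split; [lia | split; [exact J0 |]].
    intros i Ji. destruct (Z.eq_dec i 0) as [-> | Hi]; [apply Z.divide_refl | exfalso; eauto].
Qed.

Section MGGComplement.
Context {G : MLA} (N : G -> Prop).
Hypothesis N_subgroup : subgroup N.
Hypothesis N_MLZ : forall n, N n -> MLZ G n.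
Hypothesis N_divisible : forall n k, N n -> (0 < k)%Z -> exists m, N m /\ zpow m k = n.

Definition admissible (X : G -> Prop) : Prop :=
  subgroup X /\ (forall x, MGG G x -> X x) /\ (forall x, X x -> N x -> MGG G x).

Definition mulN (X : G -> Prop) (z : G) : Prop := exists x n, X x /\ N n /\ z = mul x n.

Lemma admissible_conjl X z x : admissible X -> X x -> X (conjl z x).
Proof.
  intros [[_ [XM _]] [XG _]] Hx. rewrite conjl_eq_commg_mul.
  apply XM; [apply XG, MGG_commg | exact Hx].
Qed.

Lemma admissible_MGG : admissible (MGG G).
Proof. split; [apply MGG_subgroup | split; auto]. Qed.

Lemma admissible_chain_union (F : (G -> Prop) -> Prop) :
  (exists X, F X) -> (forall X, F X -> admissible X) ->
  (forall X Y, F X -> F Y -> (forall x, X x -> Y x) \/ (forall x, Y x -> X x)) ->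
  admissible (fun z => exists X, F X /\ X z).
Proof.
  intros [X0 FX0] Fadm Ftot.
  destruct (Fadm X0 FX0) as [[X1 _] [XG _]].
  split; [split; [|split] | split].
  - exists X0. auto.
  - intros z1 z2 [Y1 [F1 H1]] [Y2 [F2 H2]].
    destruct (Fadm Y1 F1) as [[_ [M1 _]] _], (Fadm Y2 F2) as [[_ [M2 _]] _].
    destruct (Ftot Y1 Y2 F1 F2) as [S | S]; [exists Y2 | exists Y1]; auto.
  - intros z [Y [FY Hz]]. destruct (Fadm Y FY) as [[_ [_ YI]] _]. exists Y. auto.
  - intros x Hx. exists X0. auto.
  - intros z [Y [FY Hz]]. apply (Fadm Y FY), Hz.
Qed.

Lemma subgroup_mulN X : subgroup X -> subgroup (mulN X).
Proof.
  intros [X1 [XM XI]]. pose proof N_subgroup as [N1 [NM NI]].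
  split; [|split].
  - exists one, one. rewrite mulx1. auto.
  - intros ? ? [x [n [Hx [Hn ->]]]] [x' [n' [Hx' [Hn' ->]]]].
    exists (mul x x'), (mul n n'). split; [auto | split; [auto |]].
    rewrite !mulA, (mul_center_swap x n x') by apply N_MLZ, Hn. reflexivity.
  - intros ? [x [n [Hx [Hn ->]]]]. exists (inv x), (inv n). split; [auto | split; [auto |]].
    rewrite inv_mul. apply (N_MLZ _ (NI _ Hn)).
Qed.

Lemma admissible_adjoin A y :
  admissible A -> (forall j, mulN A (zpow y j) -> A (zpow y j)) ->
  admissible (fun z => exists x j, A x /\ z = mul x (zpow y j)).
Proof.
  intros HA Hy. pose proof HA as [[A1 [AM AI]] [AG AN]].
  split; [split; [|split] | split].
  - exists one, 0%Z. split; [exact A1 | rewrite zpow_0, mulx1; reflexivity].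
  - intros ? ? [x1 [j1 [H1 ->]]] [x2 [j2 [H2 ->]]].
    exists (mul x1 (conjl (zpow y j1) x2)), (j1 + j2)%Z. split.
    + apply AM; [exact H1 | apply admissible_conjl; auto].
    + rewrite zpow_add. unfold conjl. group_simpl. reflexivity.
  - intros ? [x [j [Hx ->]]]. exists (conjl (inv (zpow y j)) (inv x)), (- j)%Z. split.
    + apply admissible_conjl; auto.
    + rewrite zpow_opp. unfold conjl. group_simpl. reflexivity.
  - intros x Hx. exists x, 0%Z. split; [apply AG, Hx | rewrite zpow_0, mulx1; reflexivity].
  - intros ? [x [j [Hx ->]]] Hn. apply AN; [| exact Hn]. apply AM; [exact Hx |]. apply Hy.
    exists (inv x), (mul x (zpow y j)). split; [auto | split; [exact Hn |]].
    group_simpl. reflexivity.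
Qed.

(* If [y^k] generates the powers of [y] lying in [A N], correcting [y] by a [k]-th
   root in [N] makes those powers lie in [A] itself. *)
Lemma exists_adjoinable A y :
  admissible A -> ~ mulN A y ->
  exists y', ~ A y' /\ forall j, mulN A (zpow y' j) -> A (zpow y' j).
Proof.
  intros HA Hy. pose proof HA as [[A1 [AM AI]] _].
  pose proof (subgroup_mulN A (proj1 HA)) as [S1 [SM SI]].
  pose proof N_subgroup as [N1 [NM NI]].
  destruct (Z_subgroup_generator (fun j => mulN A (zpow y j))) as [k [Hk [Jk Hdiv]]].
  - exact S1.
  - intros i j. rewrite zpow_add. auto.
  - intros i. rewrite zpow_opp. auto.
  - assert (Hm : exists m, N m /\ A (zpow (mul y m) k)).
    { destruct (Z.eq_dec k 0) as [-> | Hk0].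
      - exists one. split; [exact N1 | exact A1].
      - destruct Jk as [x [n [Hx [Hn E]]]].
        destruct (N_divisible (inv n) k (NI n Hn) ltac:(lia)) as [m [Hm Em]].
        exists m. split; [exact Hm |].
        rewrite zpow_mulC, E, Em, mulKV by apply N_MLZ, Hm. exact Hx. }
    destruct Hm as [m [Hm Ak]].
    exists (mul y m). split.
    + intro Ay'. apply Hy. exists (mul y m), (inv m). rewrite mulKV. auto.
    + intros j Jj.
      assert (Hj : mulN A (zpow y j)).
      { replace (zpow y j) with (mul (zpow (mul y m) j) (zpow (inv m) j)).
        - apply SM; [exact Jj |]. exists one, (zpow (inv m) j).
          rewrite mul1x. split; [exact A1 | split; [apply subgroup_zpow; auto | reflexivity]].
        - rewrite <- zpow_mulC, mulKV; [reflexivity |].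
          apply subgroup_center, N_MLZ, Hm. }
      destruct (Hdiv j Hj) as [q ->].
      apply (Z_closed_mul (fun i => A (zpow (mul y m) i))); [exact A1 | | | exact Ak].
      * intros i i' Hi Hi'. rewrite zpow_add. auto.
      * intros i Hi. rewrite zpow_opp. auto.
Qed.

Lemma admissible_maximal_cover A :
  admissible A -> (forall B, (forall x, A x -> B x) -> admissible B -> forall x, B x -> A x) ->
  forall y, mulN A y.
Proof.
  intros HA Amax y. apply NNPP. intro Hy.
  destruct (exists_adjoinable A y HA Hy) as [y' [Hy' Hs]].
  apply Hy'. refine (Amax _ _ (admissible_adjoin A y' HA Hs) y' _).
  - intros x Hx. exists x, 0%Z. rewrite zpow_0, mulx1. auto.
  - exists one, 1%Z. rewrite zpow_1, mul1x. split; [exact (proj1 (proj1 HA)) | reflexivity].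
Qed.

Theorem exists_MGG_complement : exists A, admissible A /\ forall y, mulN A y.
Proof.
  destruct (zorn_subsets _ admissible (MGG G) admissible_MGG admissible_chain_union)
    as [A [HA Amax]].
  exists A. split; [exact HA | apply admissible_maximal_cover; auto].
Qed.

End MGGComplement.

(** * The stem extension cut out by a complement *)

Section SubAlgebra.
Context {G : MLA} (P : G -> Prop).
Hypothesis P1 : P one.
Hypothesis PM : forall x y, P x -> P y -> P (mul x y).
Hypothesis PI : forall x, P x -> P (inv x).
Hypothesis PS : forall x y, P x -> P y -> P (star x y).

Definition sub_car := {x : G | P x}.

Lemma sub_eq (x y : sub_car) : proj1_sig x = proj1_sig y -> x = y.
Proof.
  destruct x as [x px], y as [y py]; simpl. intros <-. f_equal. apply proof_irrelevance.
Qed.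

Definition subMLA : MLA.
Proof.
  refine (@Build_MLA sub_car
    (fun x y => exist _ (mul (proj1_sig x) (proj1_sig y))
                        (PM _ _ (proj2_sig x) (proj2_sig y)))
    (exist _ one P1)
    (fun x => exist _ (inv (proj1_sig x)) (PI _ (proj2_sig x)))
    (fun x y => exist _ (star (proj1_sig x) (proj1_sig y))
                        (PS _ _ (proj2_sig x) (proj2_sig y)))
    _ _ _ _ _ _ _ _ _ _); intros; apply sub_eq; simpl.
  - apply mulA.
  - apply mul1x.
  - apply mulx1.
  - apply mulVx.
  - apply mulxV.
  - apply star_xx.
  - apply star_xM.
  - apply star_Mx.
  - apply star_jacobi.
  - apply star_conj.
Defined.

Lemma sub_val_hom : @mla_hom subMLA G (@proj1_sig _ _).
Proof. split; reflexivity. Qed.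

End SubAlgebra.

Section StemFromComplement.
Context {G K : MLA} (b : G -> K).
Hypothesis hb : mla_hom b.
Hypothesis b_surj : forall k, exists g, b g = k.
Hypothesis b_ker : forall n, b n = one -> MLZ G n.
Variable A : G -> Prop.
Hypothesis A_subgroup : subgroup A.
Hypothesis A_MGG : forall x, MGG G x -> A x.
Hypothesis A_ker : forall x, A x -> b x = one -> MGG G x.
Hypothesis A_cover : forall y, exists x n, A x /\ b n = one /\ y = mul x n.

Definition stem_group : MLA :=
  subMLA A (proj1 A_subgroup) (proj1 (proj2 A_subgroup)) (proj2 (proj2 A_subgroup))
    (fun x y _ _ => A_MGG _ (MGG_star x y)).

Definition stem_proj (x : stem_group) : K := b (proj1_sig x).

Let in_kernel (x : stem_group) : Prop := stem_proj x = one.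

Lemma stem_proj_hom : mla_hom stem_proj.
Proof. split; intros x y; apply hb. Qed.

Definition stem_kernel : MLA.
Proof.
  refine (subMLA in_kernel _ _ _ _); unfold in_kernel.
  - apply (hom_one stem_proj_hom).
  - intros x y Hx Hy. rewrite (hom_mul stem_proj_hom), Hx, Hy. apply mulx1.
  - intros x Hx. rewrite (hom_inv stem_proj_hom), Hx. apply inv_one.
  - intros x y Hx Hy. rewrite (hom_star stem_proj_hom), Hx, Hy. apply star_xx.
Defined.

Definition stem_incl (h : stem_kernel) : stem_group := proj1_sig h.

Lemma stem_group_enlargement :
  central_enlargement stem_proj b (@proj1_sig _ _ : stem_group -> G).
Proof.
  split; [apply sub_val_hom | split; [apply sub_eq | split; [reflexivity |]]].
  intro y. destruct (A_cover y) as [x [n [Hx [Hn ->]]]].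
  exists (exist _ x Hx : stem_group), n. auto.
Qed.

Lemma stem_short_exact : short_exact stem_incl stem_proj.
Proof.
  split; [split; reflexivity |].
  split; [exact stem_proj_hom |].
  split; [apply sub_eq |].
  split.
  - intro k. destruct (b_surj k) as [g <-]. destruct (A_cover g) as [x [n [Hx [Hn ->]]]].
    exists (exist _ x Hx : stem_group). unfold stem_proj; simpl.
    rewrite (hom_mul hb), Hn, mulx1. reflexivity.
  - intro g. split.
    + intro E. exists (exist _ g E : stem_kernel). reflexivity.
    + intros [h <-]. exact (proj2_sig h).
Qed.

Theorem stem_ext_of_complement : stem_ext stem_incl stem_proj.
Proof.
  pose proof stem_group_enlargement as Henl.
  split; [split; [exact stem_short_exact |] |]; intro h.
  - apply (MLZ_hom_inj (proj1 Henl)); [apply Henl |]. apply b_ker, (proj2_sig h).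
  - destruct (MGG_image (proj1 Henl) (enlargement_MLZ_cover _ _ _ b_ker Henl)
                (proj1_sig (stem_incl h))) as [x [Hx E]].
    + apply A_ker; [exact (proj2_sig (stem_incl h)) | exact (proj2_sig h)].
    + replace (stem_incl h) with x; [exact Hx |]. apply sub_eq. auto.
Qed.

End StemFromComplement.

(** * The divisible central enlargement *)

Section CentralQuotient.
Context {P : MLA} (T : P -> Prop).
Hypothesis T_subgroup : subgroup T.
Hypothesis T_MLZ : forall x, T x -> MLZ P x.
Implicit Types x y a b : P.

Definition same_coset x y : Prop := T (mul (inv x) y).

Lemma same_coset_iff x y : same_coset x y <-> exists t, T t /\ y = mul x t.
Proof.
  split.
  - intro H. exists (mul (inv x) y). split; [exact H | group_simpl; reflexivity].
  - intros [t [Ht ->]]. unfold same_coset. group_simpl. exact Ht.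
Qed.

Lemma same_coset_refl x : same_coset x x.
Proof.
  apply same_coset_iff. exists one. split; [apply T_subgroup | symmetry; apply mulx1].
Qed.

Lemma same_coset_sym x y : same_coset x y -> same_coset y x.
Proof.
  intros [t [Ht ->]]%same_coset_iff. apply same_coset_iff.
  exists (inv t). split; [apply T_subgroup, Ht | group_simpl; reflexivity].
Qed.

Lemma same_coset_trans x y z : same_coset x y -> same_coset y z -> same_coset x z.
Proof.
  intros [t [Ht ->]]%same_coset_iff [s [Hs ->]]%same_coset_iff. apply same_coset_iff.
  exists (mul t s). split; [apply T_subgroup; auto | group_simpl; reflexivity].
Qed.

Lemma same_coset_mul a a' b b' :
  same_coset a a' -> same_coset b b' -> same_coset (mul a b) (mul a' b').
Proof.
  intros [t [Ht ->]]%same_coset_iff [s [Hs ->]]%same_coset_iff. apply same_coset_iff.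
  exists (mul t s). split; [apply T_subgroup; auto |].
  rewrite !mulA, (mul_center_swap a t b) by apply T_MLZ, Ht. reflexivity.
Qed.

Lemma same_coset_inv a a' : same_coset a a' -> same_coset (inv a) (inv a').
Proof.
  intros [t [Ht ->]]%same_coset_iff. apply same_coset_iff.
  exists (inv t). split; [apply T_subgroup, Ht |].
  rewrite inv_mul. apply T_MLZ, T_subgroup, Ht.
Qed.

Lemma same_coset_star a a' b b' :
  same_coset a a' -> same_coset b b' -> same_coset (star a b) (star a' b').
Proof.
  intros [t [Ht ->]]%same_coset_iff [s [Hs ->]]%same_coset_iff.
  rewrite star_mulLZ_l, star_mulLZ_r by (apply T_MLZ; assumption).
  apply same_coset_refl.
Qed.

Definition coset_car := {S : P -> Prop | exists x, S = same_coset x}.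

Definition coset x : coset_car := exist _ (same_coset x) (ex_intro _ x eq_refl).

Definition coset_rep (S : coset_car) : P :=
  proj1_sig (constructive_indefinite_description _ (proj2_sig S)).

Lemma coset_eq x y : same_coset x y -> coset x = coset y.
Proof.
  intro H. unfold coset. apply eq_exist_uncurried. simpl.
  assert (E : same_coset x = same_coset y).
  { apply functional_extensionality. intro z. apply propositional_extensionality.
    split; eauto using same_coset_trans, same_coset_sym. }
  exists E. apply proof_irrelevance.
Qed.

Lemma coset_eq_inv x y : coset x = coset y -> same_coset x y.
Proof.
  intro E. change (proj1_sig (coset x) y). rewrite E. apply same_coset_refl.
Qed.

Lemma coset_rep_coset S : coset (coset_rep S) = S.
Proof.
  unfold coset_rep. destruct (constructive_indefinite_description _ _) as [x Ex]. simpl.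
  destruct S as [S HS]. unfold coset. apply eq_exist_uncurried. simpl in *.
  exists (eq_sym Ex). apply proof_irrelevance.
Qed.

Lemma coset_surj (S : coset_car) : exists x, S = coset x.
Proof. exists (coset_rep S). symmetry. apply coset_rep_coset. Qed.

Lemma same_coset_rep x : same_coset (coset_rep (coset x)) x.
Proof. apply coset_eq_inv, coset_rep_coset. Qed.

Definition coset_mul (S S' : coset_car) := coset (mul (coset_rep S) (coset_rep S')).
Definition coset_inv (S : coset_car) := coset (inv (coset_rep S)).
Definition coset_star (S S' : coset_car) := coset (star (coset_rep S) (coset_rep S')).

Lemma coset_mul_coset x y : coset_mul (coset x) (coset y) = coset (mul x y).
Proof. apply coset_eq, same_coset_mul; apply same_coset_rep. Qed.

Lemma coset_inv_coset x : coset_inv (coset x) = coset (inv x).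
Proof. apply coset_eq, same_coset_inv, same_coset_rep. Qed.

Lemma coset_star_coset x y : coset_star (coset x) (coset y) = coset (star x y).
Proof. apply coset_eq, same_coset_star; apply same_coset_rep. Qed.

Ltac coset_reduce :=
  repeat match goal with S : coset_car |- _ =>
    let x := fresh "x" in destruct (coset_surj S) as [x ->]; clear S end;
  repeat rewrite ?coset_mul_coset, ?coset_inv_coset, ?coset_star_coset.

Definition quotMLA : MLA.
Proof.
  refine (@Build_MLA coset_car coset_mul (coset one) coset_inv coset_star
            _ _ _ _ _ _ _ _ _ _); intros; coset_reduce; f_equal.
  - apply mulA.
  - apply mul1x.
  - apply mulx1.
  - apply mulVx.
  - apply mulxV.
  - apply star_xx.
  - apply star_xM.
  - apply star_Mx.
  - apply star_jacobi.
  - apply star_conj.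
Defined.

Lemma coset_hom : @mla_hom P quotMLA coset.
Proof.
  split; intros x y; symmetry; [apply coset_mul_coset | apply coset_star_coset].
Qed.

Section Lift.
Context {K : MLA} (phi : P -> K).
Hypothesis hphi : mla_hom phi.
Hypothesis phi_T : forall t, T t -> phi t = one.

Definition quot_lift (S : quotMLA) : K := phi (coset_rep S).

Lemma quot_lift_coset x : quot_lift (coset x) = phi x.
Proof.
  unfold quot_lift. destruct (proj1 (same_coset_iff _ _) (same_coset_rep x)) as [t [Ht E]].
  rewrite E at 2. rewrite (hom_mul hphi), (phi_T t Ht), mulx1. reflexivity.
Qed.

Lemma quot_lift_hom : mla_hom quot_lift.
Proof.
  split; intros S S'; destruct (coset_surj S) as [x ->], (coset_surj S') as [y ->].
  - rewrite <- (hom_mul coset_hom), !quot_lift_coset. apply hphi.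
  - rewrite <- (hom_star coset_hom), !quot_lift_coset. apply hphi.
Qed.

End Lift.

End CentralQuotient.

Definition zq (z : Z) : Qc := Q2Qc (inject_Z z).

Lemma zq_add a b : zq (a + b) = (zq a + zq b)%Qc.
Proof.
  apply Q2Qc_eq_iff. unfold zq, Q2Qc. cbn [this].
  rewrite !Qred_correct, inject_Z_plus. reflexivity.
Qed.

Lemma zq_opp a : zq (- a) = (- zq a)%Qc.
Proof.
  apply Q2Qc_eq_iff. unfold zq, Q2Qc. cbn [this].
  rewrite !Qred_correct, inject_Z_opp. reflexivity.
Qed.

Lemma zq_inj a b : zq a = zq b -> a = b.
Proof. intro E. apply Q2Qc_eq_iff in E. apply inject_Z_injective, E. Qed.

Section RationalProduct.
Context (G : MLA) (I : Type).

Definition rprod_car := (G * (I -> Qc))%type.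

Lemma rprod_eq (g g' : G) (f f' : I -> Qc) :
  g = g' -> (forall t, f t = f' t) -> (g, f) = (g', f').
Proof. intros -> E. f_equal. apply functional_extensionality, E. Qed.

Definition rprodMLA : MLA.
Proof.
  refine (@Build_MLA rprod_car
    (fun x y => (mul (fst x) (fst y), fun t => (snd x t + snd y t)%Qc))
    (one, fun _ => 0%Qc)
    (fun x => (inv (fst x), fun t => (- snd x t)%Qc))
    (fun x y => (star (fst x) (fst y), fun _ => 0%Qc))
    _ _ _ _ _ _ _ _ _ _);
  intros; repeat match goal with p : rprod_car |- _ => destruct p end;
  simpl; apply rprod_eq; intros; try ring.
  - apply mulA.
  - apply mul1x.
  - apply mulx1.
  - apply mulVx.
  - apply mulxV.
  - apply star_xx.
  - apply star_xM.
  - apply star_Mx.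
  - apply star_jacobi.
  - apply star_conj.
Defined.

Lemma rprod_MLZ g f : MLZ G g -> MLZ rprodMLA (g, f).
Proof.
  intros [HL HC]. split; intros [g' f']; apply rprod_eq; simpl; auto.
  intro t. apply Qcplus_comm.
Qed.

Lemma zpow_rprod_one (h : I -> Qc) i :
  zpow ((one, h) : rprodMLA) i = (one, fun t => (zq i * h t)%Qc).
Proof.
  induction i as [|i IH|i IH] using Z.peano_ind.
  - apply rprod_eq; [reflexivity | intro t; symmetry; apply Qcmult_0_l].
  - rewrite zpow_succ, IH. apply rprod_eq; [apply mul1x | intro t].
    rewrite <- Z.add_1_r, zq_add. change (zq 1) with 1%Qc. cbn [fst snd]. ring.
  - rewrite zpow_pred, IH. apply rprod_eq; [simpl; group_simpl; reflexivity | intro t].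
    rewrite <- Z.sub_1_r, <- Z.add_opp_r, zq_add, zq_opp. change (zq 1) with 1%Qc.
    change (snd (inv ((one, h) : rprodMLA)) t) with (- h t)%Qc.
    cbn [fst snd]. rewrite Qcmult_plus_distr_l. ring.
Qed.

End RationalProduct.

Section DivisibleEnlargement.
Context {G K : MLA} (b : G -> K).
Hypothesis hb : mla_hom b.
Hypothesis b_ker : forall n, b n = one -> MLZ G n.

Definition word := list (bool * G).

Definition letter (p : bool * G) : G := if fst p then snd p else inv (snd p).

Definition word_eval (w : word) : G := fold_right (fun p acc => mul (letter p) acc) one w.

Definition letter_count (t : G) (p : bool * G) : Z :=
  if excluded_middle_informative (snd p = t) then (if fst p then 1 else -1)%Z else 0%Z.

Definition word_count (t : G) (w : word) : Z :=
  fold_right (fun p acc => (letter_count t p + acc)%Z) 0%Z w.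

Definition word_remove (t : G) (w : word) : word :=
  filter (fun p => if excluded_middle_informative (snd p = t) then false else true) w.

Definition word_inv (w : word) : word := map (fun p => (negb (fst p), snd p)) w.

Definition kernel_word (w : word) : Prop := Forall (fun p => b (snd p) = one) w.

Lemma letter_kernel p : b (snd p) = one -> b (letter p) = one.
Proof.
  destruct p as [[|] n]; cbn; intro H; [exact H |].
  rewrite (hom_inv hb), H. apply inv_one.
Qed.

Lemma word_eval_kernel w : kernel_word w -> b (word_eval w) = one.
Proof.
  induction 1 as [|p w Hp _ IH]; simpl; [apply (hom_one hb) |].
  rewrite (hom_mul hb), IH, letter_kernel by exact Hp. apply mulx1.
Qed.

Lemma word_eval_app w w' : word_eval (w ++ w') = mul (word_eval w) (word_eval w').
Proof.
  induction w as [|p w IH]; simpl; [rewrite mul1x; reflexivity |].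
  rewrite IH, mulA. reflexivity.
Qed.

Lemma word_count_app t w w' : word_count t (w ++ w') = (word_count t w + word_count t w')%Z.
Proof. induction w as [|p w IH]; simpl; [reflexivity | rewrite IH; lia]. Qed.

Lemma kernel_word_center w : kernel_word w -> center G (inv (word_eval w)).
Proof.
  intro Hw. apply b_ker. rewrite (hom_inv hb), word_eval_kernel by exact Hw. apply inv_one.
Qed.

Lemma word_eval_inv w : kernel_word w -> word_eval (word_inv w) = inv (word_eval w).
Proof.
  induction 1 as [|[c n] w Hp Hw IH]; simpl; [symmetry; apply inv_one |].
  rewrite IH, inv_mul, <- (kernel_word_center w Hw). f_equal.
  destruct c; cbn; [reflexivity | symmetry; apply inv_inv].
Qed.

Lemma word_count_inv t w : word_count t (word_inv w) = (- word_count t w)%Z.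
Proof.
  induction w as [|[c n] w IH]; simpl; [reflexivity |]. rewrite IH.
  unfold letter_count. simpl.
  destruct (excluded_middle_informative (n = t)), c; cbn [negb]; lia.
Qed.

Lemma kernel_word_app w w' : kernel_word w -> kernel_word w' -> kernel_word (w ++ w').
Proof. intros; apply Forall_app; auto. Qed.

Lemma kernel_word_inv w : kernel_word w -> kernel_word (word_inv w).
Proof. intro Hw. apply Forall_map. exact Hw. Qed.

Lemma kernel_word_remove t w : kernel_word w -> kernel_word (word_remove t w).
Proof.
  intro Hw. apply Forall_forall. intros p Hp. apply filter_In in Hp.
  exact (proj1 (Forall_forall _ _) Hw p (proj1 Hp)).
Qed.

Lemma letter_zpow p : letter p = zpow (snd p) (if fst p then 1 else -1)%Z.
Proof.
  destruct p as [[|] n]; cbn [letter fst snd]; [symmetry; apply zpow_1 |].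
  change (-1)%Z with (Z.opp 1). rewrite zpow_opp, zpow_1. reflexivity.
Qed.

Lemma word_eval_split n w :
  kernel_word w -> word_eval w = mul (zpow n (word_count n w)) (word_eval (word_remove n w)).
Proof.
  induction 1 as [|p w Hp Hw IH]; simpl; [rewrite mulx1; reflexivity |].
  unfold word_remove at 1, letter_count. simpl. fold (word_remove n w).
  destruct (excluded_middle_informative (snd p = n)) as [E | E]; simpl.
  - rewrite zpow_add, IH, letter_zpow, E, mulA. reflexivity.
  - rewrite IH, !mulA, (proj2 (b_ker _ (letter_kernel p Hp))). reflexivity.
Qed.

Lemma word_count_remove t n w :
  word_count t (word_remove n w) =
  if excluded_middle_informative (t = n) then 0%Z else word_count t w.
Proof.
  induction w as [|p w IH]; [destruct (excluded_middle_informative (t = n)); reflexivity |].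
  unfold word_remove, word_count, letter_count in *. cbn [filter fold_right]. revert IH.
  destruct (excluded_middle_informative (snd p = n)); cbv beta iota; cbn [fold_right];
    destruct (excluded_middle_informative (t = n)),
      (excluded_middle_informative (snd p = t)); intro IH; rewrite ?IH; try congruence; lia.
Qed.

(* Collect the occurrences of the first letter, which is central. *)
Lemma word_eval_trivial w :
  kernel_word w -> (forall t, word_count t w = 0%Z) -> word_eval w = one.
Proof.
  remember (length w) as m eqn:Em. revert w Em.
  induction m as [m IH] using (well_founded_induction lt_wf). intros w Em Hw Hc.
  destruct w as [|p w']; [reflexivity |].
  rewrite (word_eval_split (snd p) _ Hw), Hc, zpow_0, mul1x.
  apply (IH (length (word_remove (snd p) (p :: w')))); auto.
  - subst m. unfold word_remove. simpl.
    destruct (excluded_middle_informative (snd p = snd p)) as [_ | C]; [| congruence].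
    pose proof (filter_length_le
      (fun q => if excluded_middle_informative (snd q = snd p) then false else true) w').
    simpl. lia.
  - apply kernel_word_remove, Hw.
  - intro t. rewrite word_count_remove.
    destruct (excluded_middle_informative (t = snd p)); auto.
Qed.

(* The subgroup generated by the [(n^-1, delta_n)] with [b n = one]; dividing it out
   identifies each kernel element [n] with the basis vector [delta_n] of [G -> Qc]. *)
Definition antidiagonal (p : rprodMLA G G) : Prop :=
  exists w, kernel_word w /\ fst p = inv (word_eval w) /\
            forall t, snd p t = zq (word_count t w).

Lemma antidiagonal_subgroup : subgroup antidiagonal.
Proof.
  split; [|split].
  - exists nil. split; [constructor | split; [symmetry; apply inv_one | reflexivity]].
  - intros [g f] [g' f'] [w [Hw [E1 E2]]] [w' [Hw' [E1' E2']]].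
    exists (w ++ w'). split; [apply kernel_word_app; auto | split]; simpl in *.
    + rewrite E1, E1', word_eval_app, inv_mul. apply (kernel_word_center w Hw).
    + intro t. rewrite E2, E2', word_count_app, zq_add. reflexivity.
  - intros [g f] [w [Hw [E1 E2]]]. exists (word_inv w).
    split; [apply kernel_word_inv, Hw | split]; simpl in *.
    + rewrite E1, word_eval_inv by exact Hw. reflexivity.
    + intro t. rewrite E2, word_count_inv, zq_opp. reflexivity.
Qed.

Lemma antidiagonal_MLZ p : antidiagonal p -> MLZ (rprodMLA G G) p.
Proof.
  intros [w [Hw [E _]]]. destruct p as [g f]. apply rprod_MLZ, b_ker.
  simpl in E. rewrite E, (hom_inv hb), word_eval_kernel by exact Hw. apply inv_one.
Qed.

Definition enlarged : MLA := quotMLA antidiagonal antidiagonal_subgroup antidiagonal_MLZ.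

Definition enl_coset (p : rprodMLA G G) : enlarged := coset antidiagonal p.

Lemma enl_coset_hom : mla_hom enl_coset.
Proof. apply coset_hom. Qed.

Definition rprod_embed (g : G) : rprodMLA G G := (g, fun _ => 0%Qc).

Lemma rprod_embed_hom : mla_hom rprod_embed.
Proof. split; intros g g'; apply rprod_eq; auto; intro t; simpl; ring. Qed.

Definition enl_incl (g : G) : enlarged := enl_coset (rprod_embed g).

Lemma b_fst_hom : mla_hom (fun p : rprodMLA G G => b (fst p)).
Proof. split; intros; apply hb. Qed.

Lemma b_fst_antidiagonal p : antidiagonal p -> b (fst p) = one.
Proof.
  intros [w [Hw [E _]]]. rewrite E, (hom_inv hb), word_eval_kernel by exact Hw.
  apply inv_one.
Qed.

Definition enl_proj : enlarged -> K :=
  quot_lift antidiagonal antidiagonal_subgroup antidiagonal_MLZ (fun p => b (fst p)).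

Lemma enl_proj_coset p : enl_proj (enl_coset p) = b (fst p).
Proof. exact (quot_lift_coset _ _ _ _ b_fst_hom b_fst_antidiagonal p). Qed.

Lemma enl_proj_hom : mla_hom enl_proj.
Proof. exact (quot_lift_hom _ _ _ _ b_fst_hom b_fst_antidiagonal). Qed.

Lemma enl_incl_hom : mla_hom enl_incl.
Proof.
  split; intros g g'; unfold enl_incl.
  - rewrite (hom_mul rprod_embed_hom). apply (hom_mul enl_coset_hom).
  - rewrite (hom_star rprod_embed_hom). apply (hom_star enl_coset_hom).
Qed.

Lemma enl_incl_inj g g' : enl_incl g = enl_incl g' -> g = g'.
Proof.
  intro E. apply coset_eq_inv in E; [| exact antidiagonal_subgroup].
  destruct E as [w [Hw [E1 E2]]]. simpl in E1, E2.
  assert (Hc : forall t, word_count t w = 0%Z).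
  { intro t. apply zq_inj. rewrite <- E2. change (zq 0) with 0%Qc. ring. }
  rewrite (word_eval_trivial w Hw Hc), inv_one in E1.
  apply (mul_cancel_l (inv g)). rewrite mulVx. symmetry. exact E1.
Qed.

Lemma enl_proj_kernel_MLZ y : enl_proj y = one -> MLZ enlarged y.
Proof.
  destruct (coset_surj _ y) as [[g f] ->]. fold (enl_coset (g, f)).
  rewrite enl_proj_coset. intro Hg.
  apply (MLZ_hom_surj enl_coset_hom); [intro S; destruct (coset_surj _ S); eauto |].
  apply rprod_MLZ, b_ker, Hg.
Qed.

(* The [k]-th root of the class of [(g, f)] is the class of [(1, (f + delta_g) / k)]. *)
Lemma enl_proj_kernel_divisible y k :
  enl_proj y = one -> (0 < k)%Z -> exists m, enl_proj m = one /\ zpow m k = y.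
Proof.
  destruct (coset_surj _ y) as [[g f] ->]. fold (enl_coset (g, f)).
  rewrite enl_proj_coset. intros Hg Hk.
  set (delta := fun t => zq (word_count t ((true, g) :: nil))).
  exists (enl_coset (one, fun t => (/ zq k * (f t + delta t))%Qc)). split.
  - rewrite enl_proj_coset. apply (hom_one hb).
  - rewrite <- (hom_zpow enl_coset _ k enl_coset_hom), zpow_rprod_one.
    apply coset_eq; [exact antidiagonal_subgroup |]. exists ((false, g) :: nil).
    split; [constructor; [exact Hg | constructor] | split].
    + simpl. cbn [letter fst snd]. group_simpl. reflexivity.
    + intro t. assert (Hkq : zq k <> 0%Qc).
      { intro E. change 0%Qc with (zq 0) in E. apply zq_inj in E. lia. }
      unfold delta, word_count, letter_count. simpl.
      destruct (excluded_middle_informative (g = t)); simpl.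
      * change (zq (-1)) with (zq (Z.opp 1)). rewrite zq_opp. change (zq 1) with 1%Qc.
        field. exact Hkq.
      * change (zq 0) with 0%Qc. field. exact Hkq.
Qed.

Lemma enl_incl_enlargement : central_enlargement b enl_proj enl_incl.
Proof.
  split; [exact enl_incl_hom | split; [exact enl_incl_inj | split]].
  - intro g. apply enl_proj_coset.
  - intro y. destruct (coset_surj _ y) as [[g f] ->].
    exists g, (enl_coset (one, f)). split; [rewrite enl_proj_coset; apply (hom_one hb) |].
    unfold enl_incl. rewrite <- (hom_mul enl_coset_hom). unfold enl_coset. f_equal.
    apply rprod_eq; [symmetry; apply mulx1 | intro t; simpl; ring].
Qed.

End DivisibleEnlargement.

Theorem proposition4p12 (H G K : MLA) (a : H -> G) (b : G -> K) :
  central_ext a b ->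
  exists (H' G' K' : MLA) (a' : H' -> G') (b' : G' -> K'),
    stem_ext a' b' /\ isoclinic a b a' b'.
Proof.
  intros [[_ [hb [_ [b_surj b_exact]]]] a_MLZ].
  assert (b_ker : forall n, b n = one -> MLZ G n).
  { intros n E. destruct (proj1 (b_exact n) E) as [h <-]. apply a_MLZ. }
  set (b0 := enl_proj b hb b_ker).
  pose proof (enl_proj_hom b hb b_ker) as hb0.
  pose proof (enl_proj_kernel_MLZ b hb b_ker) as b0_ker.
  pose proof (enl_incl_enlargement b hb b_ker) as Henl.
  assert (b0_surj : forall k, exists y, b0 y = k).
  { intro k. destruct (b_surj k) as [g <-]. exists (enl_incl b hb b_ker g). apply Henl. }
  destruct (exists_MGG_complement _ (kernel_subgroup _ hb0) b0_ker
              (enl_proj_kernel_divisible b hb b_ker))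
    as [A [[A_sub [A_MGG A_ker]] A_cover]].
  exists (stem_kernel b0 hb0 A A_sub A_MGG), (stem_group A A_sub A_MGG), K,
    (stem_incl b0 hb0 A A_sub A_MGG), (stem_proj b0 A A_sub A_MGG).
  split.
  - exact (stem_ext_of_complement b0 hb0 b0_surj b0_ker A A_sub A_MGG A_ker A_cover).
  - exact (isoclinic_of_common_enlargement _ _ _ _ _ _ _ hb0 b0_ker Henl
             (stem_group_enlargement b0 A A_sub A_MGG A_cover)).
Qed.
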